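(* Consider the data-selling model described in the context, with network $G$ on $n$ buyers, prior precision $z_0>0$ and marginal cost $\gamma>0$. Assume $$z_0<\frac{1}{2\sqrt{\gamma}}\cdot\frac{n+1}{2n+1}.$$ Let $m=\alpha(G)$ be the independence number of $G$. Then every optimal contract $C$ has the following form: (i) the target set $M(C)$ is a maximum independent set of $G$; (ii) the common precision is $z=\sqrt{m/\gamma}-z_0$, and the price is $p_i=\frac{1}{z_0}-\sqrt{\gamma/m}$ for every $i\in M(C)$.
   Context: Model. There is a finite set of buyers $N=\{1,\dots,n\}$ and an undirected network $G$ on $N$: for $i\neq j$, $g_{ij}=g_{ji}\in\{0,1\}$, with $g_{ij}=1$ iff $i$ and $j$ are linked. $N_i=\{j\neq i: g_{ij}=1\}$ is the set of neighbors of $i$ and $n_i=|N_i|$. A state $\theta\sim N(0,1/z_0)$ with $z_0>0$ is unknown to all. A contract $C$ of the seller consists of a target set $M(C)\subseteq N$, a common precision $z>0$, and prices $p_i\ge 0$ for $i\in M(C)$ (buyers outside $M(C)$ get nothing and pay nothing; quality discrimination is not allowed, so all targeted buyers get the same precision $z$). Each $i\in M(C)$ receives a signal $s_i=\theta+\varepsilon_i$, with $\varepsilon_i\sim N(0,1/z)$ independent of $\theta$ and of each other. Each buyer observes the signals of his neighbors in $M(C)$ (and his own if he is in $M(C)$) and then chooses $a_i\in\mathbb{R}$ to maximize $E[-(a_i-\theta)^2]$. Write $m_i=|N_i\cap M(C)|$. Under optimal (Bayesian) actions, buyer $i\in M(C)$ gets expected payoff $-\frac{1}{z_0+(m_i+1)z}-p_i$,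 and buyer $i\notin M(C)$ gets $-\frac{1}{z_0+m_i z}$. Buyer $i\in M(C)$ accepts iff $p_i\le p(m_i,z):=\frac{1}{z_0+m_iz}-\frac{1}{z_0+(m_i+1)z}$. A contract is feasible if every $i\in M(C)$ accepts. The seller's profit is $\pi(C)=\sum_{i\in M(C)}p_i-\gamma z$ with $\gamma>0$. An optimal contract is a feasible contract maximizing $\pi$. An independent set of $G$ is a set of nodes no two of which are linked. A maximum independent set is an independent set of largest cardinality, and this cardinality is the independence number $\alpha(G)$. *)

From HB Require Import structures.
From mathcomp Require Import all_boot all_order all_algebra.
From mathcomp Require Import reals.
Set Implicit Arguments. Unset Strict Implicit. Unset Printing Implicit Defensive.
Import Order.TTheory GRing.Theory Num.Theory.
Local Open Scope ring_scope.

Definition simple_graph (n : nat) (g : rel 'I_n) : Prop :=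
  (forall i j, g i j = g j i) /\ (forall i, ~~ g i i).

Definition nbhd (n : nat) (g : rel 'I_n) (i : 'I_n) : {set 'I_n} :=
  [set j | (j != i) && g i j].

Definition independent (n : nat) (g : rel 'I_n) (S : {set 'I_n}) : bool :=
  [forall i in S, forall j in S, ~~ g i j].

Definition alpha (n : nat) (g : rel 'I_n) : nat :=
  \max_(S : {set 'I_n} | independent g S) #|S|.

Definition max_independent (n : nat) (g : rel 'I_n) (S : {set 'I_n}) : Prop :=
  independent g S /\ #|S| = alpha g.

(* A contract: target set M(C), common precision z, prices p_i (used for i in M(C)). *)
Record contract (R : realType) (n : nat) := Contract {
  target : {set 'I_n};
  prec : R;
  price : 'I_n -> R }.

Definition m_of (n : nat) (g : rel 'I_n) (M : {set 'I_n}) (i : 'I_n) : nat :=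
  #|nbhd g i :&: M|.

Definition pmax (R : realType) (z0 : R) (m : nat) (z : R) : R :=
  (z0 + m%:R * z)^-1 - (z0 + (m.+1)%:R * z)^-1.

Definition feasible (R : realType) (n : nat) (g : rel 'I_n) (z0 : R)
  (C : contract R n) : Prop :=
  0 < prec C /\
  forall i, i \in target C ->
    0 <= price C i /\ price C i <= pmax z0 (m_of g (target C) i) (prec C).

Definition profit (R : realType) (n : nat) (gamma : R) (C : contract R n) : R :=
  \sum_(i in target C) price C i - gamma * prec C.

Definition optimal (R : realType) (n : nat) (g : rel 'I_n) (z0 gamma : R)
  (C : contract R n) : Prop :=
  feasible g z0 C /\
  forall C' : contract R n, feasible g z0 C' -> profit gamma C' <= profit gamma C.

From HB Require Import structures.
From mathcomp Require Import all_boot all_order all_algebra.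
From mathcomp Require Import reals.
From mathcomp Require Import zify ring lra.
Set Implicit Arguments. Unset Strict Implicit. Unset Printing Implicit Defensive.
Import Order.TTheory GRing.Theory Num.Theory.
Local Open Scope ring_scope.

(* Feasibility caps each price at p(m_i, z), and the Caro-Wei bound
   sum_i 1/(m_i+1) <= alpha(G) controls the revenue.  For z > z0/2 one has
   p(m, z) <= p(0, z)/(m+1), strictly when m > 0, so the profit is at most
   alpha p(0, z) - gamma z.  With s = sqrt(alpha/gamma) this equals
   gamma (s-z0)^2/z0 - gamma (s-z0-z)^2/(z0+z), which is maximal exactly at
   z = s - z0, where a maximum independent set attains it.  For z <= z0/2 the
   crude bound p(m, z) <= 3/(8 z0 (m+1)) keeps the profit below that optimum as
   soon as 3 z0 < s, which is what the hypothesis on z0 guarantees. *)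

Lemma ler_pdivM2 (F : numFieldType) (a b c d : F) : 0 < b -> 0 < d ->
  (a / b <= c / d) = (a * d <= c * b).
Proof. by move=> b_gt0 d_gt0; rewrite ler_pdivrMr // mulrAC ler_pdivlMr. Qed.

Lemma ltr_pdivM2 (F : numFieldType) (a b c d : F) : 0 < b -> 0 < d ->
  (a / b < c / d) = (a * d < c * b).
Proof. by move=> b_gt0 d_gt0; rewrite ltr_pdivrMr // mulrAC ltr_pdivlMr. Qed.

Lemma ler_sum_eq (F : numDomainType) (I : finType) (P : pred I) (u v : I -> F) :
  (forall i, P i -> u i <= v i) -> \sum_(i | P i) v i <= \sum_(i | P i) u i ->
  forall i, P i -> u i = v i.
Proof.
move=> le_uv le_sum i Pi; apply/esym/eqP; rewrite -subr_eq0; apply/eqP.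
have vu_ge0 j : P j -> 0 <= v j - u j by move/le_uv; rewrite subr_ge0.
apply: (psumr_eq0P vu_ge0 _ Pi).
by apply/eqP; rewrite eq_le sumrB subr_le0 le_sum subr_ge0 ler_sum.
Qed.

Section Graph.
Variables (n : nat) (g : rel 'I_n).

Lemma independentP (S : {set 'I_n}) :
  reflect {in S &, forall i j, ~~ g i j} (independent g S).
Proof.
apply: (iffP forall_inP) => [S_ind i j iS jS | S_ind i iS].
  exact: (forall_inP (S_ind i iS)).
by apply/forall_inP => j jS; apply: S_ind.
Qed.

Lemma independent0 : independent g set0.
Proof. by apply/independentP => i j; rewrite inE. Qed.

Lemma independent_leq_alpha (S : {set 'I_n}) :
  independent g S -> (#|S| <= alpha g)%N.
Proof. by move=> S_ind; apply: leq_bigmax_cond. Qed.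

Lemma max_independent_exists : exists S, max_independent g S.
Proof.
have [|S S_ind S_max] := @eq_bigmax_cond _ (independent g) (fun S => #|S|).
  by apply/card_gt0P; exists set0; exact: independent0.
by exists S.
Qed.

Lemma m_of_subset (M M' : {set 'I_n}) i :
  M' \subset M -> (m_of g M' i <= m_of g M i)%N.
Proof. by move=> sM'M; apply/subset_leq_card/setIS. Qed.

Lemma m_of_independent (S : {set 'I_n}) i :
  independent g S -> i \in S -> m_of g S i = 0%N.
Proof.
move=> /independentP S_ind iS; apply/eqP; rewrite cards_eq0; apply/eqP/setP => j.
rewrite !inE; apply/negbTE/negP => /andP[/andP[_ gij] jS].
by move: (S_ind i j iS jS); rewrite gij.
Qed.

Hypothesis g_simple : simple_graph g.

Lemma independent_set1 i : independent g [set i].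
Proof. by case: g_simple => _ g_irr; apply/independentP => j k /set1P-> /set1P->. Qed.

Lemma alpha_gt0 (i : 'I_n) : (0 < alpha g)%N.
Proof.
by rewrite (leq_trans _ (independent_leq_alpha (independent_set1 i))) ?cards1.
Qed.

Lemma independent_setU1 (J : {set 'I_n}) v :
  independent g J -> {in J, forall j, ~~ g v j} -> independent g (v |: J).
Proof.
case: g_simple => g_sym g_irr /independentP J_ind vJ; apply/independentP => i j.
rewrite !in_setU1 => /predU1P[-> | iJ] /predU1P[-> | jJ].
- exact: g_irr.
- exact: vJ.
- by rewrite g_sym; apply: vJ.
- exact: J_ind.
Qed.

Lemma m_of0_independent (S : {set 'I_n}) :
  {in S, forall i, m_of g S i = 0%N} -> independent g S.
Proof.
case: g_simple => _ g_irr m0; apply/independentP => i j iS jS.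
have [<-|ji] := eqVneq j i; first exact: g_irr.
apply/negP => gij; move/eqP: (m0 i iS); rewrite cards_eq0 => /eqP/setP/(_ j).
by rewrite !inE ji gij jS.
Qed.

(* Greedy argument: pick a vertex of least degree in M, keep it, discard its
   closed neighbourhood and recurse; the discarded vertices weigh at most 1. *)
Lemma caro_wei (R : realFieldType) (M : {set 'I_n}) :
  exists J : {set 'I_n}, [/\ J \subset M, independent g J &
    \sum_(i in M) ((m_of g M i).+1%:R)^-1 <= (#|J|%:R : R)].
Proof.
have [k] := ubnP #|M|; elim: k M => // k IH M; rewrite ltnS => leMk.
have [-> | [v0 v0M]] := set_0Vmem M.
  by exists set0; rewrite sub0set independent0 big_set0 cards0.
have [v vM v_min] := arg_minnP (m_of g M) v0M.
have {}vM : v \in M := vM.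
set M' := M :\: (v |: nbhd g v).
have ltM'k : (#|M'| < k)%N.
  apply: leq_trans leMk; apply: proper_card; apply/properP; split.
    exact: subsetDl.
  by exists v; rewrite // !inE eqxx.
have [J' [sJ'M' J'_ind J'_weight]] := IH M' ltM'k.
have vJ' : v \notin J' by apply/negP => /(subsetP sJ'M'); rewrite !inE eqxx.
exists (v |: J'); split.
- by rewrite subUset sub1set vM (subset_trans sJ'M') ?subsetDl.
- apply: independent_setU1 => // j /(subsetP sJ'M').
  by rewrite !inE; case: eqP => //= _ /andP[].
rewrite cardsU1 vJ' natrD (big_setID (v |: nbhd g v)) /= lerD //.
  apply: le_trans (_ : \sum_(i in M :&: (v |: nbhd g v))
                         ((m_of g M v).+1%:R)^-1 <= _).
    apply: ler_sum => i; rewrite inE => /andP[iM _].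
    by rewrite lef_pV2 ?posrE ?ltr0n // ler_nat ltnS v_min.
  rewrite sumr_const -[_ *+ #|_|]mulr_natl ler_pdivrMr ?ltr0n // mul1r ler_nat.
  rewrite setIC setIUl (leq_trans (leq_card_setU _ _).1) // -add1n leq_add2r.
  by rewrite -(cards1 v) subset_leq_card ?subsetIl.
apply: le_trans J'_weight; apply: ler_sum => i _.
by rewrite lef_pV2 ?posrE ?ltr0n // ler_nat ltnS m_of_subset ?subsetDl.
Qed.

Lemma sum_inv_m_of_le_alpha (R : realFieldType) (M : {set 'I_n}) :
  \sum_(i in M) ((m_of g M i).+1%:R)^-1 <= ((alpha g)%:R : R).
Proof.
have [J [_ J_ind J_weight]] := caro_wei R M.
by apply: le_trans J_weight _; rewrite ler_nat independent_leq_alpha.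
Qed.

End Graph.

Section PriceBounds.
Variables (R : realType) (z0 : R).

Lemma pmaxE (m : nat) (z : R) : 0 < z0 -> 0 <= z ->
  pmax z0 m z = z / ((z0 + m%:R * z) * (z0 + m%:R * z + z)).
Proof.
move=> z0_gt0 z_ge0; rewrite /pmax -addn1 natrD mulrDl mul1r addrA.
have mz_ge0 : 0 <= m%:R * z by rewrite mulr_ge0 ?ler0n.
have D1_gt0 : 0 < z0 + m%:R * z by lra.
have D2_gt0 : 0 < z0 + m%:R * z + z by lra.
by field; rewrite !gt_eqF.
Qed.

Lemma pmax0E (z : R) : pmax z0 0 z = z0^-1 - (z0 + z)^-1.
Proof. by rewrite /pmax mul0r addr0 mul1r. Qed.

Lemma pmax0_gt0 (z : R) : 0 < z0 -> 0 < z -> 0 < pmax z0 0 z.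
Proof.
move=> z0_gt0 z_gt0; rewrite pmax0E subr_gt0 ltf_pV2 ?posrE ?ltrDl //.
exact: addr_gt0.
Qed.

Lemma pmax_le_small (m : nat) (z : R) : 0 < z0 -> 0 < z -> z <= z0 / 2 ->
  pmax z0 m z <= (m.+1%:R)^-1 * (3 / (8 * z0)).
Proof.
move=> z0_gt0 z_gt0 z_small; rewrite pmaxE ?(ltW z_gt0) // -[m.+1]addn1 natrD.
set x := m%:R; have x_ge0 : 0 <= x by rewrite ler0n.
have xz_ge0 : 0 <= x * z by rewrite mulr_ge0 // ltW.
rewrite [leRHS]mulrCA -invfM ler_pdivM2 ?mulr_gt0 //; try lra.
have : 0 <= z0 * (z0 - 2 * z) by rewrite mulr_ge0 //; lra.
have : 0 <= (3 * (x * z) - z0) ^+ 2 by apply: sqr_ge0.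
have : 0 <= x * z * z by rewrite mulr_ge0 // ltW.
nra.
Qed.

Lemma pmax_lt_large (m : nat) (z : R) : 0 < z0 -> z0 / 2 < z -> (0 < m)%N ->
  pmax z0 m z < (m.+1%:R)^-1 * pmax z0 0 z.
Proof.
move=> z0_gt0 z_large m_gt0; have z_gt0 : 0 < z by lra.
rewrite !pmaxE ?(ltW z_gt0) // mul0r addr0 -[m.+1]addn1 natrD.
have x_ge1 : 1 <= m%:R :> R by rewrite ler1n.
set x := m%:R in x_ge1 *.
have xz_ge0 : 0 <= x * z by rewrite mulr_ge0 // ltW; lra.
rewrite [ltRHS]mulrCA -invfM ltr_pdivM2 ?mulr_gt0 //; try lra.
rewrite ltr_pM2l //.
have : 0 < (2 * z - z0) * (z + z0) by rewrite mulr_gt0 //; lra.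
have : 0 <= (x - 1) * (z * z) by rewrite mulr_ge0 //; [lra | rewrite mulr_ge0 // ltW].
nra.
Qed.

Lemma pmax_le_large (m : nat) (z : R) : 0 < z0 -> z0 / 2 < z ->
  pmax z0 m z <= (m.+1%:R)^-1 * pmax z0 0 z.
Proof.
case: m => [|m] z0_gt0 z_large; first by rewrite invr1 mul1r.
exact/ltW/pmax_lt_large.
Qed.

Lemma pmax0_profitE (gamma s z : R) : 0 < z0 -> 0 < z ->
  gamma * s ^+ 2 * pmax z0 0 z - gamma * z =
  gamma * (s - z0) ^+ 2 / z0 - gamma * (s - (z0 + z)) ^+ 2 / (z0 + z).
Proof.
move=> z0_gt0 z_gt0; have z0z_gt0 : 0 < z0 + z by lra.
by rewrite pmax0E; field; rewrite !gt_eqF.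
Qed.

Lemma pmax0_profit_leif (gamma s z : R) : 0 < z0 -> 0 < gamma -> 0 < z ->
  gamma * s ^+ 2 * pmax z0 0 z - gamma * z <= gamma * (s - z0) ^+ 2 / z0
    ?= iff (z == s - z0).
Proof.
move=> z0_gt0 gamma_gt0 z_gt0; have z0z_gt0 : 0 < z0 + z by lra.
rewrite pmax0_profitE //; split.
  by rewrite gerBl; apply/divr_ge0/ltW/z0z_gt0; rewrite mulr_ge0 ?sqr_ge0 ?ltW.
rewrite -subr_eq0 addrAC subrr add0r oppr_eq0 mulf_eq0 invr_eq0 (gt_eqF z0z_gt0).
by rewrite orbF mulf_eq0 (gt_eqF gamma_gt0) sqrf_eq0 subr_eq0 addrC -subr_eq eq_sym.
Qed.

Lemma small_profit_lt (gamma s : R) : 0 < z0 -> 0 < gamma -> 3 * z0 < s ->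
  gamma * s ^+ 2 * (3 / (8 * z0)) < gamma * (s - z0) ^+ 2 / z0.
Proof.
move=> z0_gt0 gamma_gt0 s_large.
rewrite -!mulrA ltr_pM2l // invfM !mulrA ltr_pM2r ?invr_gt0 //.
have : 0 < (s - 3 * z0) * (5 * s - z0) by rewrite mulr_gt0 //; lra.
nra.
Qed.

End PriceBounds.

Section SumBounds.
Variables (R : realType) (n : nat) (g : rel 'I_n) (z0 : R).
Hypotheses (g_simple : simple_graph g) (z0_gt0 : 0 < z0).

Lemma sum_pmax_le_small (M : {set 'I_n}) (z : R) : 0 < z -> z <= z0 / 2 ->
  \sum_(i in M) pmax z0 (m_of g M i) z <= (alpha g)%:R * (3 / (8 * z0)).
Proof.
move=> z_gt0 z_small; apply: le_trans (_ : \sum_(i in M)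
  ((m_of g M i).+1%:R)^-1 * (3 / (8 * z0)) <= _).
  by apply: ler_sum => i _; apply: pmax_le_small.
rewrite -mulr_suml ler_wpM2r ?sum_inv_m_of_le_alpha //.
by rewrite divr_ge0 // mulr_ge0 // ltW.
Qed.

Lemma sum_pmax_le_large (M : {set 'I_n}) (z : R) : z0 / 2 < z ->
  \sum_(i in M) pmax z0 (m_of g M i) z <= (alpha g)%:R * pmax z0 0 z.
Proof.
move=> z_large; apply: le_trans (_ : \sum_(i in M)
  ((m_of g M i).+1%:R)^-1 * pmax z0 0 z <= _).
  by apply: ler_sum => i _; apply: pmax_le_large.
rewrite -mulr_suml ler_wpM2r ?sum_inv_m_of_le_alpha // ltW // pmax0_gt0 //.
by apply: lt_trans z_large; rewrite divr_gt0.
Qed.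

Lemma sum_pmax_eq_large (M : {set 'I_n}) (z : R) : z0 / 2 < z ->
  \sum_(i in M) pmax z0 (m_of g M i) z = (alpha g)%:R * pmax z0 0 z ->
  max_independent g M.
Proof.
move=> z_large sum_eq.
have P_gt0 : 0 < pmax z0 0 z by rewrite pmax0_gt0 // (lt_trans _ z_large) ?divr_gt0.
have termwise := ler_sum_eq
  (fun i (_ : i \in M) => pmax_le_large (m_of g M i) z0_gt0 z_large).
have m0 : {in M, forall i, m_of g M i = 0%N}.
  move=> i iM; case: (posnP (m_of g M i)) => // m_gt0.
  have := pmax_lt_large z0_gt0 z_large m_gt0.
  rewrite termwise ?ltxx // -mulr_suml sum_eq ler_wpM2r ?sum_inv_m_of_le_alpha //.
  exact: ltW.
have M_ind := m_of0_independent g_simple m0.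
split => //; apply/eqP; rewrite eqn_leq independent_leq_alpha //=.
rewrite -(ler_nat R) -(ler_pM2r P_gt0) -sum_eq [leRHS]mulr_natl -sumr_const.
by rewrite (eq_bigr (fun=> pmax z0 0 z)) // => i iM; rewrite m0.
Qed.

End SumBounds.

Section Contracts.
Variables (R : realType) (n : nat) (g : rel 'I_n) (z0 gamma : R).

Lemma profit_le_sum_pmax (C : contract R n) : feasible g z0 C ->
  profit gamma C <=
  \sum_(i in target C) pmax z0 (m_of g (target C) i) (prec C) - gamma * prec C.
Proof. by case=> _ C_ok; rewrite lerD2r; apply: ler_sum => i /C_ok[]. Qed.

Lemma independent_feasible (S : {set 'I_n}) (z : R) : 0 < z0 -> 0 < z ->
  independent g S -> feasible g z0 (Contract S z (fun=> pmax z0 0 z)).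
Proof.
move=> z0_gt0 z_gt0 S_ind; split=> // i iS /=.
by rewrite m_of_independent //; split; [exact/ltW/pmax0_gt0 | exact: lexx].
Qed.

Lemma profit_const_price (S : {set 'I_n}) (z p : R) :
  profit gamma (Contract S z (fun=> p)) = #|S|%:R * p - gamma * z.
Proof. by rewrite /profit /= sumr_const mulr_natl. Qed.

Lemma optimal_target_neq0 (C : contract R n) : 0 < gamma ->
  optimal g z0 gamma C -> target C != set0.
Proof.
move=> gamma_gt0 [[z_gt0 _] C_best]; apply/eqP => M0.
have half_ok : feasible g z0 (Contract set0 (prec C / 2) (price C)).
  by split=> [|i]; rewrite ?inE // divr_gt0.
have := C_best _ half_ok; rewrite /profit /= M0 !big_set0.
have : 0 < gamma * prec C by rewrite mulr_gt0.
lra.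
Qed.

End Contracts.

Lemma three_z0_lt_sqrt (R : realType) (n a : nat) (z0 gamma : R) :
  (0 < n)%N -> (0 < a)%N -> 0 < gamma ->
  z0 < (2 * Num.sqrt gamma)^-1 * ((n.+1)%:R / (n.*2.+1)%:R) ->
  3 * z0 < Num.sqrt (a%:R / gamma).
Proof.
move=> n_gt0 a_gt0 gamma_gt0 z0_lt.
have r_gt0 : 0 < Num.sqrt gamma by rewrite sqrtr_gt0.
have ratio_le : (n.+1)%:R / (n.*2.+1)%:R <= 2 / 3 :> R.
  rewrite ler_pdivM2 ?ltr0n // -!natrM ler_nat -muln2.
  lia.
have z0_lt' : 3 * z0 < (Num.sqrt gamma)^-1.
  rewrite -ltr_pdivlMl // -invfM (lt_le_trans z0_lt) //.
  have -> : (3 * Num.sqrt gamma)^-1 = (2 * Num.sqrt gamma)^-1 * (2 / 3).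
    by field; rewrite gt_eqF.
  by rewrite ler_wpM2l // invr_ge0 mulr_ge0 // ltW.
apply: lt_le_trans z0_lt' _; rewrite -sqrtrV ?(ltW gamma_gt0) //; apply: ler_wsqrtr.
by rewrite ler_peMl ?invr_ge0 ?(ltW gamma_gt0) // ler1n.
Qed.

Lemma optimal_profit_ge (R : realType) (n : nat) (g : rel 'I_n) (z0 gamma s : R)
    (C : contract R n) :
  0 < z0 -> 0 < gamma -> z0 < s -> (alpha g)%:R = gamma * s ^+ 2 ->
  optimal g z0 gamma C -> gamma * (s - z0) ^+ 2 / z0 <= profit gamma C.
Proof.
move=> z0_gt0 gamma_gt0 z0_lt_s alphaE [_ C_best].
have [J [J_ind J_card]] := max_independent_exists g.
have s_z0_gt0 : 0 < s - z0 by lra.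
have := C_best _ (independent_feasible z0_gt0 s_z0_gt0 J_ind).
rewrite profit_const_price J_card alphaE.
have [_] := pmax0_profit_leif s z0_gt0 gamma_gt0 s_z0_gt0.
by rewrite eqxx => /eqP->.
Qed.

Lemma optimal_prec_gt (R : realType) (n : nat) (g : rel 'I_n) (z0 gamma s : R)
    (C : contract R n) :
  simple_graph g -> 0 < z0 -> 0 < gamma -> 3 * z0 < s ->
  (alpha g)%:R = gamma * s ^+ 2 -> optimal g z0 gamma C -> z0 / 2 < prec C.
Proof.
move=> g_simple z0_gt0 gamma_gt0 s_large alphaE C_opt.
have [C_ok _] := C_opt; have [z_gt0 _] := C_ok.
have z0_lt_s : z0 < s by lra.
rewrite ltNge; apply/negP => z_small.
have := small_profit_lt z0_gt0 gamma_gt0 s_large; rewrite -alphaE; apply/negP.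
rewrite -leNgt.
apply: le_trans (optimal_profit_ge z0_gt0 gamma_gt0 z0_lt_s alphaE C_opt) _.
apply: le_trans (profit_le_sum_pmax gamma C_ok) _.
apply: le_trans _ (sum_pmax_le_small g_simple z0_gt0 (target C) z_gt0 z_small).
by rewrite gerBl mulr_ge0 // ltW.
Qed.

Theorem theorem1 (R : realType) (n : nat) (g : rel 'I_n) (z0 gamma : R) :
  simple_graph g -> 0 < z0 -> 0 < gamma ->
  z0 < (2 * Num.sqrt gamma)^-1 * ((n.+1)%:R / (n.*2.+1)%:R) ->
  forall C : contract R n, optimal g z0 gamma C ->
    max_independent g (target C) /\
    prec C = Num.sqrt ((alpha g)%:R / gamma) - z0 /\
    (forall i, i \in target C -> price C i = z0^-1 - Num.sqrt (gamma / (alpha g)%:R)).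
Proof.
move=> g_simple z0_gt0 gamma_gt0 z0_small C C_opt.
have [C_ok _] := C_opt; have [z_gt0 C_accept] := C_ok.
have /set0Pn[i0 _] := optimal_target_neq0 gamma_gt0 C_opt.
have s_large := three_z0_lt_sqrt (leq_ltn_trans (leq0n i0) (ltn_ord i0))
  (alpha_gt0 g_simple i0) gamma_gt0 z0_small.
set a := alpha g in s_large *; set s := Num.sqrt (a%:R / gamma) in s_large *.
have alphaE : a%:R = gamma * s ^+ 2.
  by rewrite sqr_sqrtr ?divr_ge0 ?ler0n ?(ltW gamma_gt0) // mulrC divfK ?gt_eqF.
have z0_lt_s : z0 < s by lra.
have opt_le := optimal_profit_ge z0_gt0 gamma_gt0 z0_lt_s alphaE C_opt.
have z_large := optimal_prec_gt g_simple z0_gt0 gamma_gt0 s_large alphaE C_opt.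
have profit_le := profit_le_sum_pmax gamma C_ok.
have sum_le := sum_pmax_le_large g_simple z0_gt0 (target C) z_large.
have [V_le V_eq] := pmax0_profit_leif s z0_gt0 gamma_gt0 z_gt0.
rewrite -alphaE in V_le V_eq.
have zE : prec C = s - z0 by apply/eqP; rewrite -V_eq eq_le V_le /=; lra.
have M_max : max_independent g (target C).
  by apply: (sum_pmax_eq_large (M := target C) g_simple z0_gt0 z_large); lra.
have price_ge : \sum_(i in target C) pmax z0 (m_of g (target C) i) (prec C) <=
                \sum_(i in target C) price C i.
  by move: opt_le profit_le; rewrite /profit; lra.
split; [exact: M_max | split; first exact: zE] => i iM.
rewrite (ler_sum_eq (fun i iM => (C_accept i iM).2) price_ge iM).
rewrite m_of_independent ?M_max.1 // pmax0E zE [z0 + _]addrC subrK /s.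
by rewrite -sqrtrV ?divr_ge0 ?ler0n ?(ltW gamma_gt0) // invf_div.
Qed.
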